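(* Let $H$ be a Hilbert space over $\mathbb{F}\in\{\mathbb{R},\mathbb{C}\}$ with $\dim H\ge n$, $J$ an index set and $(U(j))_{j\in J}$ a family with $U(j)=(u(j)_1,\dots,u(j)_n)\in H^n$. Suppose that the closed... more precisely, suppose that the linear subspace $\mathrm{Span}(\{u(j)_k:\ j\in J,\ k\in[1,n]\})$ has codimension at least $3n$ in $H$. Then the set $\mathcal{S}=\bigcap_{j\in J}\big(U(j)+St(n,H)\big)\subseteq H^n$ is polygonally connected: for any $X,Y\in\mathcal{S}$ there exists $Z\in H^n$ such that $tZ+(1-t)X\in\mathcal{S}$ and $tY+(1-t)Z\in\mathcal{S}$ for all $t\in[0,1]$ (so $X$ and $Y$ are joined in $\mathcal{S}$ by a polygonal path made of two straight segments).
   Context: $St(n,H)=\{(h_1,\dots,h_n)\in H^n:\ h_1,\dots,h_n \text{ linearly independent}\}$. For $U\in H^n$, $U+St(n,H)=\{U+h: h\in St(n,H)\}$. The codimension of a linear subspace $W\subseteq H$ is $\dim(H/W)$ (possibly infinite). *)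

From HB Require Import structures.
From mathcomp Require Import all_boot all_order all_algebra.
From mathcomp Require Import complex reals.
Set Implicit Arguments. Unset Strict Implicit. Unset Printing Implicit Defensive.
Import Order.TTheory GRing.Theory Num.Theory.
Local Open Scope ring_scope.

(* The scalar field F in {R, C}: [scal R true] is R, [scal R false] is C = R[i]. *)
Definition scal (R : realType) (b : bool) : numFieldType :=
  if b then (R : numFieldType) else (R[i] : numFieldType).

Definition sconj (R : realType) (b : bool) : scal R b -> scal R b :=
  match b return scal R b -> scal R b with
  | true => fun x => x
  | false => fun z : R[i] => (z^*)%C
  end.

(* Norms are compared through their squares
   [ip x x] (which are real and nonnegative). *)
Record hilbert_space (R : realType) (b : bool) (V : lmodType (scal R b)) := {
  ip : V -> V -> scal R b;
  ip_linear : forall (a : scal R b) (x y z : V), ip (a *: x + y) z = a * ip x z + ip y z;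
  ip_conj_sym : forall x y : V, ip y x = sconj (ip x y);
  ip_ge0 : forall x : V, 0 <= ip x x;
  ip_eq0 : forall x : V, ip x x = 0 -> x = 0;
  ip_complete : forall u : nat -> V,
    (forall e : scal R b, 0 < e -> exists N : nat, forall m k : nat,
        (N <= m)%N -> (N <= k)%N -> ip (u m - u k) (u m - u k) < e) ->
    exists x : V, forall e : scal R b, 0 < e -> exists N : nat, forall m : nat,
        (N <= m)%N -> ip (u m - x) (u m - x) < e
}.

Section LinAlg.
Variables (F : pzRingType) (V : lmodType F).

Definition lin_indep (m : nat) (h : 'I_m -> V) : Prop :=
  forall c : 'I_m -> F, \sum_(i < m) c i *: h i = 0 -> forall i, c i = 0.

Definition St (n : nat) : ('I_n -> V) -> Prop := fun h => lin_indep h.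

Definition translate_St (n : nat) (U : 'I_n -> V) : ('I_n -> V) -> Prop :=
  fun X => exists h, St h /\ X = (fun k => U k + h k).

Definition lspan (S : V -> Prop) : V -> Prop :=
  fun x => exists (m : nat) (c : 'I_m -> F) (s : 'I_m -> V),
    (forall i, S (s i)) /\ x = \sum_(i < m) c i *: s i.

Definition dim_ge (m : nat) : Prop := exists v : 'I_m -> V, lin_indep v.

(* codim W = dim (V/W) >= m : there are m vectors linearly independent modulo W *)
Definition codim_ge (W : V -> Prop) (m : nat) : Prop :=
  exists v : 'I_m -> V, forall c : 'I_m -> F,
    W (\sum_(i < m) c i *: v i) -> forall i, c i = 0.
End LinAlg.

From HB Require Import structures.
From mathcomp Require Import all_boot all_order all_algebra.
From mathcomp Require Import complex reals.
From Stdlib Require Import Classical FunctionalExtensionality.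
Import Order.TTheory GRing.Theory Num.Theory.
Set Implicit Arguments. Unset Strict Implicit. Unset Printing Implicit Defensive.
Local Open Scope ring_scope.

(* Let W0 be the span of all the u(j)_k.  Since codim W0 >= 3n,
   adding the n vectors of X and then the n vectors of Y to W0 lowers the
   codimension by at most 2n, so there are Z_1, ..., Z_n linearly independent
   modulo W0 + Span X + Span Y.  For such Z, every point of the LINE through
   X and Z (resp. Y and Z) lies in S: for t <> 0, a relation
   sum_k c_k (t Z_k + (1 - t) P_k - u(j)_k) = 0 puts t * sum_k c_k Z_k into
   W0 + Span P (with P = X or Y), hence all c_k vanish; for t = 0 the point
   is P itself, which lies in S by hypothesis.  In particular the two
   segments [X, Z] and [Z, Y] lie in S. *)

Section IndependenceModulo.
Variables (F : fieldType) (V : lmodType F).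

Definition subspace (W : V -> Prop) : Prop :=
  W 0 /\ forall a x y, W x -> W y -> W (a *: x + y).

Definition indep_mod (W : V -> Prop) p (v : 'I_p -> V) : Prop :=
  forall c : 'I_p -> F, W (\sum_(i < p) c i *: v i) -> forall i, c i = 0.

Definition add_line (W : V -> Prop) (x : V) : V -> Prop :=
  fun y => exists w a, W w /\ y = w + a *: x.

Definition add_span (W : V -> Prop) k (x : 'I_k -> V) : V -> Prop :=
  fun y => exists w (d : 'I_k -> F), W w /\ y = w + \sum_(i < k) d i *: x i.

Lemma subspace_scale W a x : subspace W -> W x -> W (a *: x).
Proof. by move=> [W0 WD] Wx; rewrite -[_ *: _]addr0; apply: WD. Qed.

Lemma subspace_add W x y : subspace W -> W x -> W y -> W (x + y).
Proof. by move=> [W0 WD] Wx Wy; rewrite -[x]scale1r; apply: WD. Qed.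

Lemma subspace_sum W p (c : 'I_p -> F) (x : 'I_p -> V) :
  subspace W -> (forall i, W (x i)) -> W (\sum_(i < p) c i *: x i).
Proof.
move=> sW Wx; apply: (big_ind W); first by case: sW.
  by move=> ? ?; apply: subspace_add.
by move=> i _; apply: subspace_scale.
Qed.

Lemma subspace_lspan (S : V -> Prop) : subspace (lspan S).
Proof.
split.
  by exists 0%N, (fun _ => 0), (fun _ => 0); split => [[]//|]; rewrite big_ord0.
move=> a y z [m1 [c1 [s1 [S1 ->]]]] [m2 [c2 [s2 [S2 ->]]]].
exists (m1 + m2)%N,
  (fun i => match split i with inl i1 => a * c1 i1 | inr i2 => c2 i2 end),
  (fun i => match split i with inl i1 => s1 i1 | inr i2 => s2 i2 end).
split; first by move=> i; case: (split i).
rewrite big_split_ord /= scaler_sumr; congr (_ + _); apply: eq_bigr => i _.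
  by rewrite -[lshift _ _]/(unsplit (inl _)) unsplitK scalerA.
by rewrite -[rshift _ _]/(unsplit (inr _)) unsplitK.
Qed.

Lemma subspace_add_line W x : subspace W -> subspace (add_line W x).
Proof.
move=> sW; split.
  by exists 0, 0; split; [case: sW | rewrite scale0r addr0].
move=> a y z [w1 [a1 [W1 ->]]] [w2 [a2 [W2 ->]]].
exists (a *: w1 + w2), (a * a1 + a2); split; first by case: sW => _; apply.
rewrite scalerDr scalerA scalerDl -!addrA; congr (_ + _).
by rewrite addrCA.
Qed.

Lemma subspace_add_span W k (x : 'I_k -> V) :
  subspace W -> subspace (add_span W x).
Proof.
move=> sW; split.
  exists 0, (fun _ => 0); split; first by case: sW.
  by rewrite big1 ?addr0 // => i _; rewrite scale0r.
move=> a y z [w1 [d1 [W1 ->]]] [w2 [d2 [W2 ->]]].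
exists (a *: w1 + w2), (fun i => a * d1 i + d2 i); split; first by case: sW => _; apply.
have -> : \sum_(i < k) (a * d1 i + d2 i) *: x i =
   a *: \sum_(i < k) d1 i *: x i + \sum_(i < k) d2 i *: x i.
  rewrite scaler_sumr -big_split; apply: eq_bigr => i _.
  by rewrite scalerDl scalerA.
rewrite scalerDr -!addrA; congr (_ + _).
by rewrite addrCA.
Qed.

Lemma add_span_incl W k (x : 'I_k -> V) y : W y -> add_span W x y.
Proof.
move=> Wy; exists y, (fun _ => 0); split => //.
by rewrite big1 ?addr0 // => i _; rewrite scale0r.
Qed.

Lemma indep_mod_sub (W W' : V -> Prop) p (v : 'I_p -> V) :
  (forall y, W y -> W' y) -> indep_mod W' v -> indep_mod W v.
Proof. by move=> sub iv c Wc; apply: iv; apply: sub. Qed.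

Lemma sum_lift p (i0 : 'I_p.+1) (c : 'I_p -> F) (v : 'I_p.+1 -> V) :
  \sum_(j < p) c j *: v (lift i0 j) =
  \sum_(i < p.+1) (if unlift i0 i is Some j then c j else 0) *: v i.
Proof.
rewrite (bigD1_ord i0) //= unlift_none scale0r add0r.
by apply: eq_bigr => j _; rewrite liftK.
Qed.

Lemma indep_mod_drop W p (v : 'I_p.+1 -> V) (i0 : 'I_p.+1) :
  indep_mod W v -> indep_mod W (fun j => v (lift i0 j)).
Proof.
move=> iv c; rewrite sum_lift => /iv ci j.
by move: (ci (lift i0 j)); rewrite liftK.
Qed.

Lemma indep_mod_line_out W p (v : 'I_p -> V) x :
  subspace W -> indep_mod W v -> ~ add_span W v x -> indep_mod (add_line W x) v.
Proof.
move=> sW iv xout c [w [a [Ww Ew]]].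
have a0 : a = 0.
  apply: NNPP => /eqP an0; apply: xout.
  exists (- a^-1 *: w), (fun i => a^-1 * c i); split; first exact: subspace_scale.
  rewrite -[x](scalerK an0) -[a *: x](addKr w) -Ew scalerDr scalerN scaleNr.
  by congr (_ + _); rewrite scaler_sumr; apply: eq_bigr => i _; rewrite scalerA.
by apply: iv; rewrite Ew a0 scale0r addr0.
Qed.

Lemma indep_mod_line_in W p (v : 'I_p.+1 -> V) x w0 (d : 'I_p.+1 -> F) i0 :
  subspace W -> indep_mod W v -> W w0 -> x = w0 + \sum_i d i *: v i ->
  (d i0 = 0 -> forall i, d i = 0) ->
  indep_mod (add_line W x) (fun j => v (lift i0 j)).
Proof.
move=> sW iv Ww0 Ex d_i0 c [w [a [Ww Ew]]].
pose c' i := (if unlift i0 i is Some j then c j else 0) - a * d i.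
have Wc' : W (\sum_i c' i *: v i).
  have -> : \sum_i c' i *: v i = w + a *: w0.
    rewrite /c'; under eq_bigr => i _ do rewrite scalerBl.
    rewrite sumrB -sum_lift Ew.
    have -> : \sum_i (a * d i) *: v i = a *: (x - w0).
      by rewrite Ex addrC addKr scaler_sumr; apply: eq_bigr => i _; rewrite scalerA.
    by rewrite scalerBr opprB [a *: w0 - _]addrC addrA addrK.
  by apply: subspace_add => //; apply: subspace_scale.
have c'0 := iv _ Wc'.
have /eqP : a * d i0 = 0.
  by move: (c'0 i0); rewrite /c' unlift_none sub0r => /eqP; rewrite oppr_eq0 => /eqP.
rewrite mulf_eq0 => /orP [/eqP a0 | /eqP /d_i0 d0] j;
  move: (c'0 (lift i0 j)); rewrite /c' liftK.
  by rewrite a0 mul0r subr0.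
by rewrite d0 mulr0 subr0.
Qed.

Lemma indep_mod_add_line W p (v : 'I_p.+1 -> V) x :
  subspace W -> indep_mod W v -> exists v' : 'I_p -> V, indep_mod (add_line W x) v'.
Proof.
move=> sW iv; case: (classic (add_span W v x)) => [[w0 [d [Ww0 Ex]]] | xout].
  have [i0 d_i0] : exists i0, d i0 = 0 -> forall i, d i = 0.
    case: (classic (exists i, d i <> 0)) => [[i di] | d0]; first by exists i => /di.
    by exists ord0 => _ i; apply: NNPP => di; apply: d0; exists i.
  by exists (fun j => v (lift i0 j)); apply: (indep_mod_line_in sW iv Ww0 Ex).
exists (fun j => v (lift ord0 j)).
by apply: indep_mod_drop; apply: indep_mod_line_out.
Qed.

Lemma indep_mod_add_span k : forall m W (v : 'I_(k + m) -> V) (x : 'I_k -> V),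
  subspace W -> indep_mod W v -> exists z : 'I_m -> V, indep_mod (add_span W x) z.
Proof.
elim: k => [|k IH] m W v x sW iv.
  exists v; apply: indep_mod_sub iv => y [w [d [Ww ->]]].
  by rewrite big_ord0 addr0.
have [v' iv'] := indep_mod_add_line (x ord0) sW iv.
have [z iz] := IH m _ v' (fun i => x (lift ord0 i)) (subspace_add_line (x ord0) sW) iv'.
exists z; apply: indep_mod_sub iz => y [w [d [Ww ->]]].
exists (w + d ord0 *: x ord0), (fun i => d (lift ord0 i)); split.
  by exists w, (d ord0).
by rewrite big_ord_recl addrA.
Qed.

Lemma lin_indep_shift W n (Z P u : 'I_n -> V) (a b : F) :
  subspace W -> (forall k, W (u k)) -> indep_mod (add_span W P) Z -> a != 0 ->
  lin_indep (fun k => a *: Z k + b *: P k - u k).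
Proof.
move=> sW Wu iZ an0 c rel.
have combZ : \sum_k (a * c k) *: Z k =
    \sum_k c k *: u k + \sum_k (- (b * c k)) *: P k.
  apply/eqP; rewrite -subr_eq0 -[X in _ == X]rel opprD addrA -!sumrB; apply/eqP.
  apply: eq_bigr => k _; rewrite scalerBr scalerDr !scalerA scaleNr opprK.
  by rewrite [c k * a]mulrC [c k * b]mulrC addrAC.
have /iZ ac0 : add_span W P (\sum_k (a * c k) *: Z k).
  by rewrite combZ; exists (\sum_k c k *: u k), (fun k => - (b * c k)); split;
    [apply: subspace_sum|].
by move=> k; move/eqP: (ac0 k); rewrite mulf_eq0 (negbTE an0) => /eqP.
Qed.

Lemma translate_StP n (u X : 'I_n -> V) :
  translate_St u X <-> lin_indep (fun k => X k - u k).
Proof.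
split => [[h [hind ->]] c | Xind].
  by under eq_bigr => k _ do rewrite addrC addKr; apply: hind.
exists (fun k => X k - u k); split => //.
by apply: functional_extensionality => k; rewrite addrC subrK.
Qed.

Lemma translate_St_line W n (u P Z : 'I_n -> V) :
  subspace W -> (forall k, W (u k)) -> indep_mod (add_span W P) Z ->
  translate_St u P -> forall t, translate_St u (fun k => t *: Z k + (1 - t) *: P k).
Proof.
move=> sW Wu iZ uP t; case: (eqVneq t 0) => [-> | tn0].
  by under [fun k => _]functional_extensionality => k do
    rewrite scale0r add0r subr0 scale1r.
by apply/translate_StP; apply: lin_indep_shift iZ tn0.
Qed.

End IndependenceModulo.

Theorem proposition3p3 (R : realType) (b : bool) (V : lmodType (scal R b))
    (HV : hilbert_space V) (n : nat) (J : Type) (U : J -> 'I_n -> V) :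
  dim_ge V n ->
  codim_ge (lspan (fun v : V => exists (j : J) (k : 'I_n), v = U j k)) (3 * n)%N ->
  let S := fun X : 'I_n -> V => forall j : J, translate_St (U j) X in
  forall X Y : 'I_n -> V, S X -> S Y ->
  exists Z : 'I_n -> V, forall t : scal R b, 0 <= t <= 1 ->
    S (fun k => t *: Z k + (1 - t) *: X k) /\
    S (fun k => t *: Y k + (1 - t) *: Z k).
Proof.
rewrite (_ : (3 * n = n + (n + n))%N); last by rewrite !mulSn mul0n addn0.
move=> _ [v iv] S X Y SX SY.
set W0 := lspan _ in iv.
have sW0 : subspace W0 := subspace_lspan _.
have W0U j k : W0 (U j k) by exists 1%N, (fun _ => 1), (fun _ => U j k);
  split => [_|]; [exists j, k | rewrite big_ord1 scale1r].
have [z1 iz1] := indep_mod_add_span X sW0 iv.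
have [Z iZ] := indep_mod_add_span Y (subspace_add_span X sW0) iz1.
exists Z => t _; split => j.
  apply: (translate_St_line sW0 (W0U j) _ (SX j)).
  by apply: indep_mod_sub iZ => y; apply: add_span_incl.
have t_eq : 1 - (1 - t) = t by rewrite opprB addrC subrK.
have -> : (fun k => t *: Y k + (1 - t) *: Z k) =
          (fun k => (1 - t) *: Z k + (1 - (1 - t)) *: Y k).
  by apply: functional_extensionality => k; rewrite t_eq addrC.
apply: (translate_St_line (subspace_add_span X sW0) _ iZ (SY j)).
by move=> k; apply: add_span_incl.
Qed.
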